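(* Let $G$ be a planar trivalent graph with a perfect matching $M$. If $G\setminus M$ (the graph with all vertices of $G$ and the edges not in $M$) contains a cycle with exactly $3$ edges, then $\langle G:M\rangle_2(1)=0$.
   Context: Graphs are finite and may have multiple edges; trivalent means every vertex has degree $3$. The $2$-factor polynomial $\langle G:M\rangle_2(z)\in\mathbb{Z}[z,z^{-1}]$ is defined as follows. Embed $G$ in the $2$-sphere. For a matching edge $e=uv$, let $\alpha,\beta$ be the other two edge-ends at $u$ and $\gamma,\delta$ the other two at $v$, labelled so that in a small disk around $e$ they appear in cyclic order $\alpha,\beta,\delta,\gamma$. The $0$-resolution at $e$ deletes $e,u,v$ and joins $\alpha$ to $\gamma$ and $\beta$ to $\delta$ by disjoint arcs; the $1$-resolution joins $\alpha$ to $\delta$ and $\beta$ to $\gamma$ by two arcs crossing once. For a state $s:M\to\{0,1\}$, resolving every matching edge accordingly yields $c(s)$ immersed closed curves, and $\langle G:M\rangle_2(z)=\sum_s(-z)^{|s|}(z+z^{-1})^{c(s)}$, where $|s|$ is the number of edges assigned $1$. This is independent of the chosen embedding. *)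

From HB Require Import structures.
From mathcomp Require Import all_boot all_order all_algebra all_fingroup.
Set Implicit Arguments.
Unset Strict Implicit.
Unset Printing Implicit Defensive.
Import GRing.Theory.

(* A trivalent multigraph G (loops and multiple edges allowed) is encoded by
   darts (half-edges): [D] is the finite set of darts, [vt d] is the vertex
   of dart [d], and [ed] is a fixed-point-free involution pairing the two
   darts of each edge.  An embedding of G in the sphere is a rotation system
   [rot] (a cyclic order of the darts around each vertex, read
   counterclockwise) whose genus is 0 (Euler formula, per component). *)
Section TwoFactor.
Variables (V D : finType) (vt : D -> V) (ed rot : {perm D}).

Definition trivalent_graph : Prop :=
  [/\ forall d, ed d != d,
      forall d, ed (ed d) = d &
      forall v, #|[set d | vt d == v]| = 3].

(* rot permutes the darts around each vertex, without fixed point; since each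
   vertex has 3 darts, rot induces a 3-cycle at each vertex. *)
Definition rotation_system : Prop :=
  forall d, vt (rot d) = vt d /\ rot d != d.

Definition n_faces : nat := #|porbits (ed * rot)%g|.

(* connected components of the graph (every vertex carries darts) *)
Definition n_components : nat :=
  #|[set orbit 'P <<[set ed; rot]>> d | d : D]|.

(* genus-0 condition : V - E + F = 2 on each component *)
Definition spherical_embedding : Prop :=
  (#|V| + n_faces = #|D| %/ 2 + 2 * n_components)%N.

(* a perfect matching, given by the set of darts of its edges *)
Definition perfect_matching (M : {set D}) : Prop :=
  (forall d, d \in M -> ed d \in M) /\
  (forall v, #|[set d in M | vt d == v]| = 1%N).

Definition triangle_off_matching (M : {set D}) : Prop :=
  exists d1 d2 d3 : D,
    [/\ d1 \notin M, d2 \notin M & d3 \notin M] /\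
    [/\ vt (ed d1) = vt d2, vt (ed d2) = vt d3 & vt (ed d3) = vt d1] /\
    [/\ vt d1 != vt d2, vt d2 != vt d3 & vt d3 != vt d1].

(* States s : M -> {0,1} are encoded by the set S of darts of the matching
   edges assigned 1 (S \subset M, closed under ed); |s| = #|S| / 2. *)
Definition state (M S : {set D}) : bool :=
  (S \subset M) && [forall d in S, ed d \in S].

(* Resolution at the matching edge e = uv with dart m at u (ed m at v):
   with alpha = rot m, beta = rot^2 m at u and gamma = rot^2 (ed m),
   delta = rot (ed m) at v, the cyclic order around e is alpha,beta,delta,gamma.
   0-resolution: alpha-gamma, beta-delta; 1-resolution: alpha-delta, beta-gamma. *)
Definition jump (M S : {set D}) (d d' : D) : bool :=
  [exists m in M,
     ((d == rot m) &&
        (d' == if m \in S then rot (ed m) else rot (rot (ed m))))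
  || ((d == rot (rot m)) &&
        (d' == if m \in S then rot (rot (ed m)) else rot (ed m)))].

Definition curve_rel (M S : {set D}) : rel D :=
  fun d d' => [&& d \notin M, d' \notin M &
                  [|| d' == ed d, jump M S d d' | jump M S d' d]].

Definition n_curves (M S : {set D}) : nat :=
  n_comp (curve_rel M S) (~: M).

Definition two_factor_eval (R : unitRingType) (M : {set D}) (z : R) : R :=
  (\sum_(S : {set D} | state M S)
     (- z) ^+ (#|S| %/ 2) * (z + z^-1) ^+ n_curves M S)%R.

End TwoFactor.

(* At z = 1 a state s contributes (-1)^|s| 2^c(s), and 2^c(s) is the number
   of 2-colourings L of the curves of s, so <G:M>_2(1) is a signed count of
   pairs (s, L).  Each vertex of the triangle carries two of its three edges,
   which lie on curves; by pigeonhole two of these edges get the same colour,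
   and at their common vertex the two non-matching darts have the same colour.
   The jumps of s at the matching edge there then force all four darts around
   that edge to share this colour, so switching s at that edge keeps L a
   colouring of the new curves and flips the sign.  Choosing the edge from L
   alone makes this a sign-reversing involution. *)

From HB Require Import structures.
From mathcomp Require Import all_boot all_order all_algebra all_fingroup.
Set Implicit Arguments. Unset Strict Implicit. Unset Printing Implicit Defensive.
Import GRing.Theory Num.Theory.

Definition closed_subsets (T : finType) (e : rel T) (a : {set T}) : {set {set T}} :=
  [set L : {set T} | (L \subset a) &&
     [forall x, forall y, e x y ==> ((x \in L) == (y \in L))]].

Lemma closed_subsetsP (T : finType) (e : rel T) (a L : {set T}) :
  reflect (L \subset a /\ closed e L) (L \in closed_subsets e a).
Proof.
rewrite inE; apply: (iffP andP) => -[sLa cL]; split=> //.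
  by move=> x y exy; apply/eqP; move/forallP/(_ x)/forallP/(_ y)/implyP: cL; apply.
by apply/forallP=> x; apply/forallP=> y; apply/implyP=> /cL ->.
Qed.

(* A closed subset of [a] is a union of components, so it is determined by the
   set of component roots it contains. *)
Lemma card_closed_subsets (T : finType) (e : rel T) (a : {set T}) :
  symmetric e -> (forall x y, e x y -> x \in a) ->
  #|closed_subsets e a| = 2 ^ n_comp e a.
Proof.
move=> e_sym e_a; have c_sym := sym_connect_sym e_sym.
have a_closed : closed e a.
  by move=> x y exy; rewrite (e_a _ _ exy) (e_a y x) // e_sym.
pose R := [set x in a | roots e x].
have -> : n_comp e a = #|R| by apply: eq_card => x; rewrite !inE andbC.
pose comps (P : {set T}) := [set x in a | fingraph.root e x \in P].
have comps_inj : {in powerset R &, injective comps}.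
  suff sub_comps (P Q : {set T}) : P \subset R -> comps P = comps Q -> P \subset Q.
    move=> P Q; rewrite !inE => sPR sQR eqPQ.
    by apply/eqP; rewrite eqEsubset (sub_comps P Q) // (sub_comps Q P).
  move=> sPR eqPQ; apply/subsetP => x Px.
  have /setIdP[xa /eqP rx] := subsetP sPR x Px.
  have : x \in comps P by rewrite inE xa rx.
  by rewrite eqPQ inE rx => /andP[].
rewrite -card_powerset -(card_in_imset comps_inj); apply: eq_card => L.
apply/closed_subsetsP/imsetP => [[sLa cL] | [P _ ->]].
  exists (L :&: R); first by rewrite inE subsetIr.
  apply/setP => x; rewrite !inE.
  have [xa | xNa] := boolP (x \in a); last first.
    by apply/negbTE; apply: contra xNa; apply: (subsetP sLa).
  rewrite -(closed_connect a_closed (connect_root e x)) xa (roots_root c_sym) /=.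
  by rewrite !andbT; apply: closed_connect (connect_root e x).
split; first by apply/subsetP => x /setIdP[].
move=> x y exy; rewrite !inE (closed_connect a_closed (connect1 exy)).
by rewrite (fingraph.rootP c_sym (connect1 exy)).
Qed.

Lemma sum_sign_reversing_involution (R : numDomainType) (I : finType)
    (P : pred I) (F : I -> R) (phi : I -> I) :
  involutive phi -> (forall i, P i -> P (phi i) /\ F (phi i) = - F i)%R ->
  (\sum_(i | P i) F i = 0)%R.
Proof.
move=> phiK phiP; set s := (\sum_(i | P i) F i)%R.
have P_phi i : P (phi i) = P i.
  by apply/idP/idP => [/phiP[] | /phiP[]//]; rewrite phiK.
suff : (s *+ 2 == 0)%R by rewrite mulrn_eq0 => /eqP.
rewrite mulr2n addr_eq0 {1}/s (reindex_inj (can_inj phiK)) /= -sumrN.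
by apply/eqP/eq_big => // i; rewrite P_phi => /phiP[].
Qed.

Section Vertices.

Variables (V D : finType) (vt : D -> V) (rot : {perm D}).
Hypothesis card_vertex : forall v, #|[set d | vt d == v]| = 3.
Hypothesis rot_sys : rotation_system vt rot.

Lemma vt_rot d : vt (rot d) = vt d. Proof. exact: (rot_sys d).1. Qed.

Lemma rot_neq d : rot d != d. Proof. exact: (rot_sys d).2. Qed.

Lemma rot2_neq d : rot (rot d) != d.
Proof.
apply/eqP => rot2d.
have sub : [set d; rot d] \subset [set x | vt x == vt d].
  by apply/subsetP => x; rewrite !inE => /orP[]/eqP->; rewrite ?vt_rot eqxx.
have /cards1P[y others] : #|[set x | vt x == vt d] :\: [set d; rot d]| == 1.
  by rewrite cardsD (setIidPr sub) card_vertex cards2 (eq_sym d) rot_neq.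
have : y \in [set x | vt x == vt d] :\: [set d; rot d] by rewrite others set11.
rewrite !inE => /andP[/norP[yNd yNrd] vy].
suff : rot y \in [set y] by rewrite inE (negbTE (rot_neq y)).
rewrite -others !inE vt_rot vy andbT -{1}rot2d !(inj_eq perm_inj).
by rewrite negb_or yNrd yNd.
Qed.

Lemma darts_at_vertex d : [set x | vt x == vt d] = [set d; rot d; rot (rot d)].
Proof.
apply/esym/eqP; rewrite eqEcard card_vertex; apply/andP; split.
  by apply/subsetP => x; rewrite !inE => /orP[/orP[]|]/eqP->; rewrite ?vt_rot eqxx.
rewrite setUC cardsU1 cards2 !inE (inj_eq perm_inj) !(negbTE (rot2_neq _)).
by rewrite (negbTE (rot_neq _)) eq_sym rot_neq.
Qed.

End Vertices.

Section Toggle.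

Variables (D : finType) (ed : {perm D}).
Hypothesis edK : involutive ed.
Hypothesis ed_neq : forall d, ed d != d.

Definition toggle_edge (S : {set D}) (m : D) : {set D} :=
  [set d | (d \in S) (+) ((d == m) || (d == ed m))].

Lemma toggle_edgeK m : involutive (toggle_edge^~ m).
Proof. by move=> S; apply/setP => d; rewrite !inE addbK. Qed.

Lemma ed_in_toggle_edge (S : {set D}) m d :
  {in S, forall d, ed d \in S} -> (ed d \in toggle_edge S m) = (d \in toggle_edge S m).
Proof.
move=> S_ed; have ed_eq d' : (ed d == d') = (d == ed d').
  by rewrite -{1}(edK d') (inj_eq perm_inj).
rewrite !inE !ed_eq edK orbC.
by congr (_ (+) _); apply/idP/idP => [/S_ed|/S_ed//]; rewrite edK.
Qed.

Lemma card_toggle_edge (S : {set D}) m :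
  {in S, forall d, ed d \in S} -> m \notin S -> #|toggle_edge S m| = #|S| + 2.
Proof.
move=> S_ed mNS; have edmNS : ed m \notin S by apply: contra mNS => /S_ed; rewrite edK.
have -> : toggle_edge S m = m |: (ed m |: S).
  apply/setP => d; rewrite !inE.
  case dS: (d \in S); last by rewrite orbF.
  by rewrite (negbTE (memPn mNS d dS)) (negbTE (memPn edmNS d dS)) orbT.
by rewrite !cardsU1 !inE edmNS (negbTE mNS) eq_sym (negbTE (ed_neq m)) /= !add1n addn2.
Qed.

Lemma sign_toggle_edge (R : ringType) (S : {set D}) m :
  {in S, forall d, ed d \in S} ->
  ((-1) ^+ (#|toggle_edge S m| %/ 2) = - (-1) ^+ (#|S| %/ 2) :> R)%R.
Proof.
have sign_up (S' : {set D}) : {in S', forall d, ed d \in S'} -> m \notin S' ->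
    ((-1) ^+ (#|toggle_edge S' m| %/ 2) = - (-1) ^+ (#|S'| %/ 2) :> R)%R.
  move=> S'_ed mNS'; rewrite card_toggle_edge // -[(_ + 2)%N]/(_ + 1 * 2)%N.
  by rewrite divnDMl // addn1 exprS mulN1r.
move=> S_ed; have [mS | mNS] := boolP (m \in S); last exact: sign_up.
rewrite -{2}(toggle_edgeK m S) (sign_up (toggle_edge S m)) ?opprK //.
  by move=> d; rewrite -ed_in_toggle_edge //; apply.
by rewrite inE mS eqxx.
Qed.

End Toggle.

Section Resolution.

Variables (V D : finType) (vt : D -> V) (ed rot : {perm D}) (M : {set D}).
Hypothesis edK : involutive ed.
Hypothesis ed_neq : forall d, ed d != d.
Hypothesis card_vertex : forall v, #|[set d | vt d == v]| = 3.
Hypothesis rot_sys : rotation_system vt rot.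
Hypothesis M_ed : forall d, d \in M -> ed d \in M.
Hypothesis M_vertex : forall v, #|[set d in M | vt d == v]| = 1.

Lemma matching_dart_unique m m' : m \in M -> m' \in M -> vt m = vt m' -> m = m'.
Proof.
move=> mM m'M vm; have /cards1P[z Mz] : #|[set d in M | vt d == vt m]| == 1.
  by rewrite M_vertex.
have : m \in [set d in M | vt d == vt m] by rewrite inE mM eqxx.
have : m' \in [set d in M | vt d == vt m] by rewrite inE m'M vm eqxx.
by rewrite Mz !inE => /eqP-> /eqP->.
Qed.

Lemma matching_dart_at v : exists2 m, m \in M & vt m = v.
Proof.
have /cards1P[m Mm] : #|[set d in M | vt d == v]| == 1 by rewrite M_vertex.
have : m \in [set d in M | vt d == v] by rewrite Mm set11.
by rewrite inE => /andP[mM /eqP vm]; exists m.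
Qed.

Lemma rot_notin_matching m : m \in M -> rot m \notin M.
Proof.
move=> mM; apply: contra (rot_neq rot_sys m) => rmM.
by rewrite (matching_dart_unique rmM mM) ?(vt_rot rot_sys).
Qed.

Lemma rot2_notin_matching m : m \in M -> rot (rot m) \notin M.
Proof.
move=> mM; apply: contra (rot2_neq card_vertex rot_sys m) => rrmM.
by rewrite (matching_dart_unique rrmM mM) ?(vt_rot rot_sys).
Qed.

Lemma nonmatching_dart_at m x :
  m \in M -> vt x = vt m -> x \notin M -> (x == rot m) || (x == rot (rot m)).
Proof.
move=> mM vx xNM; have : x \in [set d | vt d == vt m] by rewrite inE vx.
rewrite (darts_at_vertex card_vertex rot_sys) !inE -orbA => /orP[/eqP xm|//].
by rewrite xm mM in xNM.
Qed.

(* [L] is a 2-colouring of the resolved curves; at a vertex whose matching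
   dart is [m], the two other darts are [rot m] and [rot (rot m)]. *)
Definition monochromatic_at (L : {set D}) (m : D) : bool :=
  (rot m \in L) == (rot (rot m) \in L).

Lemma monochromatic_vertex (L : {set D}) t t' :
  t \notin M -> t' \notin M -> t != t' -> vt t = vt t' ->
  (t \in L) = (t' \in L) -> exists2 m, m \in M & monochromatic_at L m.
Proof.
move=> tNM t'NM tt' vtt' Ltt'; have [m mM vm] := matching_dart_at (vt t).
exists m => //; rewrite /monochromatic_at.
move: (nonmatching_dart_at mM (etrans (esym vtt') (esym vm)) t'NM)
  (nonmatching_dart_at mM (esym vm) tNM) tt' Ltt'.
by case/orP=> /eqP-> /orP[]/eqP->; rewrite ?eqxx // => _ ->.
Qed.

Lemma ed_in_matching d : (ed d \in M) = (d \in M).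
Proof. by apply/idP/idP => [/M_ed|/M_ed//]; rewrite edK. Qed.

Lemma triangle_monochromatic (L : {set D}) :
  triangle_off_matching vt ed M ->
  (forall d, d \notin M -> (ed d \in L) = (d \in L)) ->
  exists2 m, m \in M & monochromatic_at L m.
Proof.
move=> [d1 [d2 [d3 [[d1NM d2NM d3NM] [[e12 e23 e31] [v12 v23 v31]]]]]] L_ed.
have edNM d : d \notin M -> ed d \notin M by rewrite ed_in_matching.
have [c13 | c13] := eqVneq (d1 \in L) (d3 \in L).
  apply: (@monochromatic_vertex _ d1 (ed d3)); rewrite ?edNM ?L_ed //.
  by apply: contraNneq v23 => d1E; rewrite -e12 d1E edK.
have [c12 | c12] := eqVneq (d1 \in L) (d2 \in L).
  apply: (@monochromatic_vertex _ (ed d1) d2); rewrite ?edNM ?L_ed //.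
  by apply: contraNneq v31 => E; rewrite -e23 -E edK.
apply: (@monochromatic_vertex _ (ed d2) d3); rewrite ?edNM ?L_ed //.
  by apply: contraNneq v12 => E; rewrite -e31 -E edK.
by move: c13 c12; case: (d1 \in L); case: (d2 \in L); case: (d3 \in L).
Qed.

Lemma curve_rel_sym S : symmetric (curve_rel ed rot M S).
Proof.
move=> x y; rewrite /curve_rel andbCA [in LHS]orbCA [jump _ _ _ _ x y || _]orbC.
by rewrite -orbA [y == _]eq_sym (can2_eq edK edK).
Qed.

Definition colored_state (p : {set D} * {set D}) : bool :=
  state ed M p.1 && (p.2 \in closed_subsets (curve_rel ed rot M p.1) (~: M)).

Lemma two_factor_eval_at1 (R : unitRingType) :
  two_factor_eval ed rot M (1 : R) =
  (\sum_(p | colored_state p) (-1) ^+ (#|p.1| %/ 2))%R.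
Proof.
rewrite /two_factor_eval invr1 (eq_bigr (fun S =>
  \sum_(L in closed_subsets (curve_rel ed rot M S) (~: M)) (-1) ^+ (#|S| %/ 2)))%R.
  exact: pair_big_dep.
move=> S _; rewrite sumr_const -mulr_natr; congr (_ * _)%R.
rewrite /n_curves card_closed_subsets ?natrX //; first exact: curve_rel_sym.
by move=> x y /andP[xNM _]; rewrite inE.
Qed.

Definition crossing_darts (m : D) : {set D} :=
  [set rot m; rot (rot m); rot (ed m); rot (rot (ed m))].

Lemma jump_toggle_edge (S : {set D}) m x y :
  jump ed rot M (toggle_edge ed S m) x y ->
  jump ed rot M S x y \/ x \in crossing_darts m /\ y \in crossing_darts m.
Proof.
case/existsP=> m' /andP[m'M].
have [/orP[]/eqP-> | m'Nm] := boolP ((m' == m) || (m' == ed m)); last first.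
  rewrite inE (negbTE m'Nm) addbF => jump_m'.
  by left; apply/existsP; exists m'; rewrite m'M.
all: rewrite ?edK => /orP[]/andP[/eqP-> /eqP->]; right.
all: by case: ifP; rewrite !inE !eqxx ?orbT.
Qed.

Lemma crossing_darts_colour (S L : {set D}) m :
  m \in M -> closed (curve_rel ed rot M S) L -> monochromatic_at L m ->
  {in crossing_darts m, forall x, (x \in L) = (rot m \in L)}.
Proof.
move=> mM cL /eqP mono; have edmM : ed m \in M by apply: M_ed.
have crossNM x : x \in crossing_darts m -> x \notin M.
  rewrite !inE -!orbA => /or4P[]/eqP->;
  by rewrite ?rot2_notin_matching ?rot_notin_matching.
have jump_colour x y : x \in crossing_darts m -> y \in crossing_darts m ->
    jump ed rot M S x y -> (x \in L) = (y \in L).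
  move=> /crossNM xNM /crossNM yNM jxy; apply: cL.
  by rewrite /curve_rel xNM yNM jxy orbT.
have c1 : (rot m \in L) = ((if m \in S then rot (ed m) else rot (rot (ed m))) \in L).
  apply: jump_colour; first by rewrite !inE eqxx.
    by case: ifP; rewrite !inE eqxx ?orbT.
  by apply/existsP; exists m; rewrite mM !eqxx.
have c2 : (rot m \in L) = ((if m \in S then rot (rot (ed m)) else rot (ed m)) \in L).
  rewrite mono; apply: jump_colour; first by rewrite !inE eqxx ?orbT.
    by case: ifP; rewrite !inE eqxx ?orbT.
  by apply/existsP; exists m; rewrite mM !eqxx orbT.
move=> x; rewrite !inE -!orbA => /or4P[]/eqP->; case: ifP c1 c2 => _ c1 c2;
  by rewrite -?mono -?c1 -?c2.
Qed.

Lemma closed_toggle_edge (S L : {set D}) m :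
  m \in M -> monochromatic_at L m ->
  L \in closed_subsets (curve_rel ed rot M S) (~: M) ->
  L \in closed_subsets (curve_rel ed rot M (toggle_edge ed S m)) (~: M).
Proof.
move=> mM mono /closed_subsetsP[sLM cL]; apply/closed_subsetsP; split=> //.
have colour := crossing_darts_colour mM cL mono.
have jump_colour x y : x \notin M -> y \notin M ->
    jump ed rot M (toggle_edge ed S m) x y -> (x \in L) = (y \in L).
  move=> xNM yNM /jump_toggle_edge[jxy | [/colour-> /colour->] //].
  by apply: cL; rewrite /curve_rel xNM yNM jxy orbT.
move=> x y /and3P[xNM yNM /or3P[exy | jxy | jyx]].
- by apply: cL; rewrite /curve_rel xNM yNM exy.
- exact: jump_colour.
- by rewrite (jump_colour y x).
Qed.

Lemma state_toggle_edge (S : {set D}) m :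
  m \in M -> state ed M S -> state ed M (toggle_edge ed S m).
Proof.
move=> mM /andP[sSM /forall_inP S_ed]; apply/andP; split.
  apply/subsetP => d; rewrite inE; have [/(subsetP sSM) //| _ /=] := boolP (d \in S).
  by case/orP=> /eqP->; rewrite ?M_ed.
by apply/forall_inP => d; rewrite (ed_in_toggle_edge edK).
Qed.

(* The edge is chosen from [L] alone, so that [switch] is an involution. *)
Definition switch (p : {set D} * {set D}) : {set D} * {set D} :=
  if [pick m in M | monochromatic_at p.2 m] is Some m
  then (toggle_edge ed p.1 m, p.2) else p.

Lemma switch_snd p : (switch p).2 = p.2.
Proof. by rewrite /switch; case: pickP. Qed.

Lemma switchK : involutive switch.
Proof.
move=> [S L]; rewrite {1}/switch switch_snd /switch /=.
by case: pickP => [m _ | _] //=; rewrite toggle_edgeK.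
Qed.

Lemma switch_colored_state (R : ringType) p :
  triangle_off_matching vt ed M -> colored_state p ->
  colored_state (switch p) /\
  ((-1) ^+ (#|(switch p).1| %/ 2) = - (-1) ^+ (#|p.1| %/ 2) :> R)%R.
Proof.
move=> triangle; case: p => S L /andP[stS colL] /=.
have [m mM monoL] : exists2 m, m \in M & monochromatic_at L m.
  apply: (triangle_monochromatic triangle).
  move=> d dNM; have /closed_subsetsP[_ cL] := colL; apply/esym/cL.
  by rewrite /curve_rel dNM ed_in_matching dNM eqxx.
rewrite /switch /=; case: pickP => [{m mM monoL} m /andP[mM monoL] | /(_ m)].
  have /andP[_ /forall_inP S_ed] := stS.
  split; last exact: sign_toggle_edge.
  by rewrite /colored_state /= state_toggle_edge // closed_toggle_edge.
by rewrite mM monoL.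
Qed.

End Resolution.

Unset Implicit Arguments.

Theorem lemma2p9 (V D : finType) (vt : D -> V) (ed rot : {perm D})
    (M : {set D}) :
  trivalent_graph vt ed ->
  rotation_system vt rot ->
  spherical_embedding V ed rot ->
  perfect_matching vt ed M ->
  triangle_off_matching vt ed M ->
  two_factor_eval ed rot M (1 : int) = 0%R.
Proof.
move=> [ed_neq edK card_vertex] rot_sys _ [M_ed M_vertex] triangle.
rewrite (two_factor_eval_at1 _ _ edK).
apply: (sum_sign_reversing_involution (switchK ed rot M)) => p.
exact: (switch_colored_state edK ed_neq card_vertex rot_sys M_ed M_vertex _ triangle).
Qed.
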